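(* For $r\ge 1$ and $\alpha^1,\dots,\alpha^r\in\mathrm{ord}$, we have $\sup(\alpha^1,\dots,\alpha^r)<\mathrm S(\alpha^j)_{j\in\{1,\dots,r\}}$.
   Context: Work constructively. Let $\mathfrak F$ be a set of index sets such that: $\mathbb N$ and each $\mathbb N_k=\{n\in\mathbb N:n<k\}$ ($k\ge 0$) belong to $\mathfrak F$; every finitely enumerated subset of an element of $\mathfrak F$ is isomorphic to an element of $\mathfrak F$; for $J\in\mathfrak F$ the set of finitely enumerated subsets of $J$ is isomorphic to an element of $\mathfrak F$; $\mathfrak F$ is stable under disjoint unions indexed by elements of $\mathfrak F$. A finitely enumerated subset of $A$ is one given by a map $\mathbb N_k\to A$; write $F\subseteq_f I$. The set $\mathrm{ord}$ is inductively generated by $\underline 0$ and, for every family $(\alpha_i)_{i\in I}$ with $I\in\mathfrak F$, $\alpha_i\in\mathrm{ord}$, an element $\mathrm S(\alpha_i)_{i\in I}$; elements of this second kind form $\mathrm{ord}^*$; for such $\alpha$, $I_\alpha=I$ and $\alpha_i$ are its definitional subordinals; $I_{\underline 0}=\emptyset$. For a finite list $F$ in $I_\alpha$, $\alpha_F$ is the list of the $\alpha_i$, $i\in F$. Supremum: for a family $(\alpha^j)_{j\in J}$ in $\mathrm{ord}^*$ with $J\in\mathfrak F$, $\sup(\alpha^j)_{j\in J}=\mathrm S(\varepsilon_k)_{k\in K}$ where $K$ is the disjoint union of the $I_{\alpha^j}$ (injections $\iota_j$) and $\varepsilon_{\iota_j(i)}=(\alpha^j)_i$; for a finite family in $\mathrm{ord}$,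 $\sup(\alpha^1,\dots,\alpha^r)$ is $\underline 0$ if all are $\underline 0$, else the sup of those in $\mathrm{ord}^*$. Relations between an element and a nonempty finite list, by simultaneous induction: $\alpha\le\beta^1,\dots,\beta^m$ means $\alpha_i<\beta^1,\dots,\beta^m$ for all $i\in I_\alpha$; $\alpha<\beta^1,\dots,\beta^m$ means there exist $F_1\subseteq_f I_{\beta^1},\dots,F_m\subseteq_f I_{\beta^m}$, not all empty, with $\alpha\le\beta^1_{F_1},\dots,\beta^m_{F_m}$ (concatenated list). *)

From mathcomp Require Import all_boot.
Set Implicit Arguments. Unset Strict Implicit. Unset Printing Implicit Defensive.

(** The class 𝔉 of admissible index sets, as a predicate on types with its
    closure properties. *)
Record Frak := {
  inF :> Type -> Prop;
  inF_nat : inF nat;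
  (* ℕ_k = {n | n < k} ∈ 𝔉, rendered as the ordinal type 'I_k *)
  inF_ord : forall k : nat, inF 'I_k;
  (* every finitely enumerated subset (image of e : ℕ_k -> I) of an element
     of 𝔉 is isomorphic to an element of 𝔉 *)
  inF_finsub : forall (I : Type), inF I -> forall (k : nat) (e : 'I_k -> I),
      exists (J : Type), inF J /\
        exists (f : J -> {x : I | exists i, e i = x})
               (g : {x : I | exists i, e i = x} -> J),
          cancel f g /\ cancel g f;
  (* the set of finitely enumerated subsets of J (given by enumerations,
     i.e. finite lists) is isomorphic to an element of 𝔉 *)
  inF_finsubs : forall (J : Type), inF J ->
      exists (K : Type), inF K /\
        exists (f : K -> seq J) (g : seq J -> K), cancel f g /\ cancel g f;
  inF_sigma : forall (J : Type), inF J -> forall (I : J -> Type),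
      (forall j, inF (I j)) -> inF {j : J & I j}
}.

(** ord: generated by 0 and S(α_i)_{i∈I}, I ∈ 𝔉. *)
Inductive ord (Fr : Frak) : Type :=
| ozero : ord Fr
| osucc (I : Type) (HI : Fr I) (f : I -> ord Fr) : ord Fr.
Arguments ozero {Fr}.

Section Ord.
Variable Fr : Frak.

Definition Ix (a : ord Fr) : Type :=
  match a with ozero => Empty_set | osucc K _ _ => K end.

Definition sub (a : ord Fr) : Ix a -> ord Fr :=
  match a as a0 return Ix a0 -> ord Fr with
  | ozero => fun e => match e with end
  | osucc _ _ f => f
  end.

(** Elements of ord* (second kind), as their data. *)
Record ordStar := OStar { sI : Type; sHI : Fr sI; sf : sI -> ord Fr }.

Definition ofStar (s : ordStar) : ord Fr := osucc (sHI s) (@sf s).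

Definition toStar (a : ord Fr) : option ordStar :=
  match a with ozero => None | osucc K HK f => Some (@OStar K HK f) end.

(** an arbitrary default element of ord*, only used as a placeholder for [nth] *)
Definition dStar : ordStar := @OStar 'I_0 (inF_ord Fr 0) (fun _ => ozero).

Definition supFam (J : Type) (HJ : Fr J) (b : J -> ordStar) : ord Fr :=
  osucc (@inF_sigma Fr J HJ (fun j => sI (b j)) (fun j => sHI (b j)))
        (fun p => sf (projT2 p)).

(** sup of a finite family (α^1,…,α^r) in ord: 0 if all are 0, otherwise the
    sup of those (in order) lying in ord*. *)
Definition fsup (r : nat) (a : 'I_r -> ord Fr) : ord Fr :=
  let s := pmap toStar [seq a j | j <- enum 'I_r] in
  match s with
  | [::] => ozero
  | _ :: _ => @supFam 'I_(size s) (inF_ord Fr (size s)) (fun i => nth dStar s i)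
  end.

(** α < β^1,…,β^m given the relation "α ≤ _" : there are finite lists
    F_k ⊆_f I_{β^k}, not all empty, with α ≤ β^1_{F_1},…,β^m_{F_m}. *)
Definition lt_of (leA : seq (ord Fr) -> Prop) (bs : seq (ord Fr)) : Prop :=
  exists Fs : forall k : 'I_(size bs), seq (Ix (nth ozero bs k)),
    (exists k, 0 < size (Fs k)) /\
    leA (flatten [seq map (@sub (nth ozero bs k)) (Fs k)
                 | k : 'I_(size bs) <- enum 'I_(size bs)]).

Fixpoint ole (a : ord Fr) : seq (ord Fr) -> Prop :=
  match a with
  | ozero => fun _ => True
  | osucc _ _ f => fun bs => forall i, lt_of (ole (f i)) bs
  end.

Definition olt (a : ord Fr) (bs : seq (ord Fr)) : Prop := lt_of (ole a) bs.

End Ord.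

From mathcomp Require Import all_boot.

Set Implicit Arguments.
Unset Strict Implicit.
Unset Printing Implicit Defensive.

(* Select all of S(α^j)'s index set, so that the comparison list is α^1,…,α^r.
   Each definitional subordinal of the sup is some (α^j)_i, hence lies below
   that list through the single selection F_j = [i], by reflexivity of ≤. *)

Lemma flatten_map_supp (T : eqType) (U : Type) (g : T -> seq U) (s : seq T) (k : T) :
  uniq s -> k \in s -> (forall j, j != k -> g j = [::]) ->
  flatten (map g s) = g k.
Proof.
move=> + + gk.
have flatten_out t : k \notin t -> flatten (map g t) = [::].
  elim: t => //= j t IH; rewrite in_cons negb_or => /andP[kj kt].
  by rewrite gk 1?eq_sym // IH.
elim: s => //= j s IH /andP[js us]; rewrite in_cons.
case: (eqVneq k j) js => [<- ks _ | kj _ /= ks]; first by rewrite flatten_out ?cats0.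
by rewrite gk 1?eq_sym // IH.
Qed.

Lemma nth_pmap_exists (T U : Type) (f : T -> option U) x0 y0 (s : seq T) n :
  n < size (pmap f s) ->
  exists2 m, m < size s & f (nth x0 s m) = Some (nth y0 (pmap f s) n).
Proof.
elim: s n => //= x s IH n.
case fx: (f x) => [y|] /=; last by case/IH=> m; exists m.+1.
by case: n => [|n] /=; [exists 0 | case/IH=> m; exists m.+1].
Qed.

Section Ordinals.
Variable Fr : Frak.
Implicit Types (x : ord Fr) (bs : seq (ord Fr)) (P : seq (ord Fr) -> Prop).

Lemma lt_of_block P bs (k : 'I_(size bs)) (l : seq (Ix (nth ozero bs k))) :
  0 < size l -> P (map (@sub Fr _) l) -> lt_of P bs.
Proof.
move=> l_gt0 Pl.
pose Fs := dfwith (fun k' : 'I_(size bs) => [::] : seq (Ix (nth ozero bs k'))) l.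
exists Fs; split; first by exists k; rewrite /Fs dfwith_in.
rewrite (@flatten_map_supp _ _ _ _ k) ?enum_uniq ?mem_enum ?/Fs ?dfwith_in //.
by move=> j; rewrite eq_sym => kj; rewrite dfwith_out.
Qed.

Lemma lt_of_sub P bs (k : 'I_(size bs)) x (i : Ix x) :
  nth ozero bs k = x -> P [:: sub i] -> lt_of P bs.
Proof. by move=> bs_k; case: x / bs_k i => i; apply: (@lt_of_block _ _ _ [:: i]). Qed.

Lemma ole_of_olt_subs x bs : (forall i : Ix x, olt (sub i) bs) -> ole x bs.
Proof. by case: x. Qed.

Lemma ole_refl x : ole x [:: x].
Proof.
elim: x => //= I HI f IH i.
exact: (@lt_of_sub _ [:: osucc HI f] ord0 (osucc HI f) i).
Qed.

Lemma olt_sub_map (I : finType) (b : I -> ord Fr) j (i : Ix (b j)) :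
  olt (sub i) [seq b j | j <- enum I].
Proof.
have j_lt : enum_rank j < size [seq b j | j <- enum I].
  by rewrite size_map -cardT ltn_ord.
apply: (@lt_of_sub _ _ (Ordinal j_lt)); last exact: ole_refl.
by rewrite /= (nth_map j) ?nth_enum_rank // -cardT ltn_ord.
Qed.

Lemma toStar_sub x st :
  toStar x = Some st -> forall i : sI st, exists i' : Ix x, sub i' = sf i.
Proof. by case: x => //= K HK f [<-] i; exists i. Qed.

Lemma fsup_sub r (a : 'I_r -> ord Fr) (p : Ix (fsup a)) :
  exists j (i : Ix (a j)), sub i = sub p.
Proof.
move: p; rewrite /fsup; set L := map a _.
case eL: (pmap (@toStar Fr) L) => [|s0 s] //= p.
have := @nth_pmap_exists _ _ (@toStar Fr) ozero (dStar Fr) L (projT1 p).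
rewrite eL size_map size_enum_ord => -[|m m_lt]; first exact: ltn_ord.
pose j := Ordinal m_lt.
rewrite /L -[m]/(nat_of_ord j) (nth_map j) ?size_enum_ord // nth_ord_enum.
by move=> /toStar_sub/(_ (projT2 p))[i <-]; exists j, i.
Qed.

End Ordinals.

Theorem lemma4p1 (Fr : Frak) (r : nat) (hr : 1 <= r) (a : 'I_r -> ord Fr) :
  olt (fsup a) [:: osucc (inF_ord Fr r) a].
Proof.
apply: (@lt_of_block _ _ [:: osucc (inF_ord Fr r) a] ord0 (enum 'I_r)).
  by rewrite size_enum_ord.
apply: ole_of_olt_subs => p; have [j [i <-]] := fsup_sub p.
exact: olt_sub_map.
Qed.
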